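(* Let $(Q,\mathcal{K})$ be a learning space with $|Q|\ge 2$ and let $Q'$ be a proper non-empty subset of $Q$. The following are equivalent: (i) $Q'$ is yielding; (ii) every plus child of $\mathcal{K}$ (induced by $Q'$) is a learning space.
   Context: All sets are finite. A knowledge structure is a family $\mathcal{K}$ of subsets of $Q=\bigcup\mathcal{K}\neq\varnothing$ with $\varnothing\in\mathcal{K}$. A learning space is a knowledge structure satisfying: [L1] for $K\subset L$ in $\mathcal{K}$ with $|L\setminus K|=n$ there is a chain $K=K_0\subset\dots\subset K_n=L$ with $K_{i+1}=K_i\cup\{q_i\}\in\mathcal{K}$, $q_i\notin K_i$; [L2] if $K\subset L$ in $\mathcal{K}$ and $K\cup\{q\}\in\mathcal{K}$ with $q\notin K$ then $L\cup\{q\}\in\mathcal{K}$. For $Q'\subset Q$: $K\sim L$ iff $K\cap Q'=L\cap Q'$, with $[K]$ the equivalence class of $K$ in $\mathcal{K}$. The $Q'$-child determined by $K$ is $\mathcal{K}_{[K]}=\{L\setminus\bigcap[K]: L\in\mathcal{K}, L\sim K\}$; it is trivial if it equals $\{\varnothing\}$. For a non-trivial child, the plus child is $\mathcal{K}_{[K]}^+=\mathcal{K}_{[K]}\cup\{\varnothing\}$ (a learning space on its own union). $Q'$ is yielding if for every $K\in\mathcal{K}$ and every state $L$ minimal for inclusion in $[K]$, $|L\setminus\bigcap[K]|\le 1$. *)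

(* The ground set is modelled inside a finite type T;
   a family of sets is a {set {set T}}, and its domain is its union. *)
From mathcomp Require Import all_boot.
Set Implicit Arguments.
Unset Strict Implicit.
Unset Printing Implicit Defensive.

Section LS.
Variable T : finType.

Definition domain (F : {set {set T}}) : {set T} := \bigcup_(A in F) A.

Definition knowledge_structure (F : {set {set T}}) : Prop :=
  domain F != set0 /\ set0 \in F.

Definition axiom_L1 (F : {set {set T}}) : Prop :=
  forall K L, K \in F -> L \in F -> K \subset L ->
    exists c : nat -> {set T},
      [/\ c 0 = K, c #|L :\: K| = L &
          forall i, i < #|L :\: K| ->
            c i.+1 \in F /\ exists q, q \notin c i /\ c i.+1 = q |: c i].

Definition axiom_L2 (F : {set {set T}}) : Prop :=
  forall K L q, K \in F -> L \in F -> K \subset L -> q \notin K ->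
    q |: K \in F -> q |: L \in F.

Definition learning_space (F : {set {set T}}) : Prop :=
  [/\ knowledge_structure F, axiom_L1 F & axiom_L2 F].

Definition eq_class (F : {set {set T}}) (Q' : {set T}) (K : {set T})
  : {set {set T}} := [set L in F | L :&: Q' == K :&: Q'].

Definition class_meet (F : {set {set T}}) (Q' : {set T}) (K : {set T})
  : {set T} := \bigcap_(L in eq_class F Q' K) L.

Definition child (F : {set {set T}}) (Q' : {set T}) (K : {set T})
  : {set {set T}} := [set L :\: class_meet F Q' K | L in eq_class F Q' K].

Definition trivial_child (F : {set {set T}}) (Q' : {set T}) (K : {set T})
  : Prop := child F Q' K = [set set0].

Definition plus_child (F : {set {set T}}) (Q' : {set T}) (K : {set T})
  : {set {set T}} := child F Q' K :|: [set set0].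

Definition minimal_in (C : {set {set T}}) (L : {set T}) : Prop :=
  L \in C /\ forall L', L' \in C -> L' \subset L -> L' = L.

Definition yielding (F : {set {set T}}) (Q' : {set T}) : Prop :=
  forall K L, K \in F -> minimal_in (eq_class F Q' K) L ->
    #|L :\: class_meet F Q' K| <= 1.

End LS.

(** In a learning space the class [C] of a state [K] (for the relation
    induced by [Q']) is closed under unions and convex, and every member of
    the plus child is [L :\: M] with [L] in [C] and [M] the meet of [C].
    Hence [L2] and one-step growth between non-empty states of the plus child
    are inherited from the learning space. The only step that can fail is the
    first one, out of the empty set towards [L :\: M]: yielding provides it,
    since a minimal member [L0] of [C] below [L] has [#|L0 :\: M| <= 1].
    Conversely, if a minimal [L] had [#|L :\: M| >= 2], the first step
    [[set q]] of a chain from [set0] to [L :\: M] in the plus child would be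
    [L' :\: M] for a member [L'] of [C] strictly below [L]. *)
From mathcomp Require Import all_boot.

Set Implicit Arguments.
Unset Strict Implicit.
Unset Printing Implicit Defensive.

Section Families.
Variable T : finType.
Implicit Types (P : {set {set T}}) (A B L : {set T}).

Definition augmentable P : Prop :=
  forall A B, A \in P -> B \in P -> A \proper B ->
    exists q, [/\ q \notin A, q \in B & q |: A \in P].

Lemma augmentable_L1 P : augmentable P -> axiom_L1 P.
Proof.
move=> aug A B AP BP sAB; move hn: #|B :\: A| => n.
elim: n A hn AP sAB => [|n IHn] A hn AP sAB.
  exists (fun _ => A); split=> //; apply/eqP.
  by rewrite eqEsubset sAB -setD_eq0 -cards_eq0 hn.
have pAB : A \proper B.
  rewrite properEneq sAB andbT; apply/eqP => eAB.
  by move: hn; rewrite eAB setDv cards0.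
have [q [qA qB qAP]] := aug A B AP BP pAB.
have sqAB : q |: A \subset B by rewrite subUset sub1set qB sAB.
have hqn : #|B :\: (q |: A)| = n.
  move: hn; rewrite (cardsD1 q) inE qA qB add1n => -[<-].
  by apply: eq_card => x; rewrite !inE negb_or andbA.
have [c [c0 cn cS]] := IHn (q |: A) hqn qAP sqAB.
exists (fun i => if i is i'.+1 then c i' else A); split=> // -[|i] hi //=.
  by rewrite c0; split=> //; exists q.
exact: cS.
Qed.

Lemma L1_augmentable P : axiom_L1 P -> augmentable P.
Proof.
move=> l1 A B AP BP pAB.
have [c [c0 cn cS]] := l1 A B AP BP (proper_sub pAB).
set n := #|B :\: A| in cn cS.
have n_gt0 : 0 < n.
  by move: pAB; rewrite properE lt0n cards_eq0 setD_eq0 => /andP[].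
have chain_mono i : i < n -> c 1 \subset c i.+1.
  elim: i => [|i IHi] lt_in //; have [_ [q' [_ ->]]] := cS i.+1 lt_in.
  exact: subset_trans (IHi (ltnW lt_in)) (subsetUr _ _).
have [c1P [q [qc0 c1E]]] := cS 0 n_gt0.
have sc1B : c 1 \subset B by rewrite -cn -(prednK n_gt0) chain_mono // prednK.
exists q; rewrite -c0 -c1E; split=> //.
by apply: (subsetP sc1B); rewrite c1E setU11.
Qed.

Lemma exists_minimal_below P L :
  L \in P -> exists2 L0, minimal_in P L0 & L0 \subset L.
Proof.
move=> LP; pose S := [set L' in P | L' \subset L].
have LS : L \in S by rewrite inE LP subxx.
case: (@arg_minnP _ L (mem S) (fun L' : {set T} => #|L'|) LS) => L0.
rewrite /= inE => /andP[L0P sL0L] L0min; exists L0 => //.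
split=> // L' L'P sL'L0.
apply/eqP; rewrite eqEcard sL'L0 L0min // inE L'P.
exact: subset_trans sL0L.
Qed.

End Families.

Lemma learning_space_setU (T : finType) (F : {set {set T}}) K L :
  learning_space F -> K \in F -> L \in F -> K :|: L \in F.
Proof.
case=> [[_ F0] l1 l2] KF LF.
have [c [c0 cn cS]] := l1 set0 L F0 LF (sub0set L).
suff /(_ _ (leqnn _)) [] :
    forall i, i <= #|L :\: set0| -> c i \in F /\ K :|: c i \in F.
  by rewrite cn.
elim=> [|i IHi] lt_in; first by rewrite c0 setU0.
have [ciF Kci] := IHi (ltnW lt_in); have [ci1F [q [qci ci1E]]] := cS i lt_in.
split=> //; rewrite ci1E setUCA.
by apply: (l2 (c i)) => //; [exact: subsetUr | rewrite -ci1E].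
Qed.

Section Classes.
Variables (T : finType) (F : {set {set T}}) (Q' K : {set T}).
Local Notation C := (eq_class F Q' K).
Local Notation M := (class_meet F Q' K).
Implicit Types (A B L X : {set T}).

Lemma eq_class_self : K \in F -> K \in C.
Proof. by move=> KF; rewrite inE KF eqxx. Qed.

Lemma eq_class_state L : L \in C -> L \in F.
Proof. by rewrite inE => /andP[]. Qed.

Lemma class_meet_sub L : L \in C -> M \subset L.
Proof. exact: bigcap_inf. Qed.

Lemma class_meetUD L : L \in C -> M :|: (L :\: M) = L.
Proof. by move=> LC; rewrite -{1}(setIidPr (class_meet_sub LC)) setID. Qed.

Lemma eq_class_convex A B X : A \in C -> B \in C -> X \in F ->
  A \subset X -> X \subset B -> X \in C.
Proof.
rewrite !inE => /andP[_ /eqP eA] /andP[_ /eqP eB] XF sAX sXB.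
by rewrite XF eqEsubset -{1}eB -eA !setSI.
Qed.

Lemma eq_classU A B : learning_space F -> A \in C -> B \in C -> A :|: B \in C.
Proof.
move=> lsF AC BC; rewrite inE learning_space_setU ?eq_class_state //= setIUl.
by move: AC BC; rewrite !inE => /andP[_ /eqP->] /andP[_ /eqP->]; rewrite setUid.
Qed.

Lemma mem_plus_child L : L \in C -> L :\: M \in plus_child F Q' K.
Proof. by move=> LC; rewrite inE; apply/orP; left; apply/imsetP; exists L. Qed.

Lemma set0_plus_child : set0 \in plus_child F Q' K.
Proof. by rewrite !inE eqxx orbT. Qed.

Lemma plus_childP X : X \in plus_child F Q' K ->
  X = set0 \/ exists2 L, L \in C & X = L :\: M.
Proof.
by rewrite !inE => /orP[/imsetP[L LC ->]|/eqP->]; [right; exists L | left].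
Qed.

Lemma nontrivial_child L : L \in C -> L :\: M != set0 -> ~ trivial_child F Q' K.
Proof.
move=> LC LM0 childE; move: (imset_f (fun L => L :\: M) LC).
by rewrite [imset _ _]childE inE (negbTE LM0).
Qed.

Lemma minimal_class_card L :
  axiom_L1 (plus_child F Q' K) -> minimal_in C L -> #|L :\: M| <= 1.
Proof.
move=> l1P [LC Lmin]; rewrite leqNgt; apply/negP => LM_gt1.
have LM0 : set0 \proper L :\: M by rewrite proper0 -cards_eq0 -lt0n ltnW.
have [q [_ qLM]] := L1_augmentable l1P set0_plus_child (mem_plus_child LC) LM0.
rewrite setU0 => /plus_childP[/setP/(_ q) | [L' L'C qE]].
  by rewrite !inE eqxx.
have sL'L : L' \subset L.
  by rewrite -(class_meetUD L'C) -(class_meetUD LC) setUS // -qE sub1set.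
by move: LM_gt1; rewrite -(Lmin L' L'C sL'L) -qE cards1.
Qed.

Lemma plus_child_knowledge_structure :
  K \in F -> ~ trivial_child F Q' K -> knowledge_structure (plus_child F Q' K).
Proof.
move=> KF nt; split; last exact: set0_plus_child.
apply/eqP => dom0; apply: nt.
have child0 X : X \in child F Q' K -> X = set0.
  by move=> Xch; apply/eqP; rewrite -subset0 -dom0 (bigcup_sup X) // inE Xch.
have KMch : K :\: M \in child F Q' K by apply: imset_f; exact: eq_class_self.
apply/setP => X; rewrite inE; apply/idP/eqP => [/child0 // | ->].
by rewrite -(child0 _ KMch).
Qed.

End Classes.

Section PlusChild.
Variables (T : finType) (F : {set {set T}}) (Q' K : {set T}).
Hypothesis lsF : learning_space F.
Local Notation C := (eq_class F Q' K).
Local Notation M := (class_meet F Q' K).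
Local Notation P := (plus_child F Q' K).

Lemma plus_child_step_nonempty LA LB : LA \in C -> LB \in C ->
  LA :\: M \proper LB :\: M ->
  exists q, [/\ q \notin LA :\: M, q \in LB :\: M & q |: (LA :\: M) \in P].
Proof.
move=> LAC LBC pAB; case: lsF => _ l1 _.
have sL : LA \subset LB.
  by rewrite -(class_meetUD LAC) -(class_meetUD LBC) setUS // proper_sub.
have pL : LA \proper LB.
  by rewrite properEneq sL andbT; apply: contraTneq pAB => ->; rewrite properxx.
have [q [qLA qLB qLAF]] :=
  L1_augmentable l1 (eq_class_state LAC) (eq_class_state LBC) pL.
have qM : q \notin M by apply: contra qLA; exact: subsetP (class_meet_sub LAC) q.
have qLAC : q |: LA \in C.
  apply: (eq_class_convex LAC LBC qLAF); first exact: subsetUr.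
  by rewrite subUset sub1set qLB.
exists q; split; first by rewrite inE (negbTE qLA) andbF.
  by rewrite inE qM.
rewrite -(setDidPl (_ : [disjoint [set q] & M])) ?disjoints1 //.
by rewrite -setDUl mem_plus_child.
Qed.

Lemma plus_child_step_set0 LB : yielding F Q' -> K \in F -> LB \in C ->
  LB :\: M != set0 -> exists2 q, q \in LB :\: M & [set q] \in P.
Proof.
move=> yF KF LBC LBM0; have [L0 [L0C L0min] sL0LB] := exists_minimal_below LBC.
have := yF K L0 KF (conj L0C L0min); rewrite leq_eqVlt ltnS leqn0 cards_eq0.
case/orP=> [/cards1P[q L0ME] | /eqP L0ME].
  exists q; last by rewrite -L0ME mem_plus_child.
  by apply: (subsetP (setSD M sL0LB)); rewrite L0ME set11.
have [|q [_ qLB]] := plus_child_step_nonempty L0C LBC.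
  by rewrite L0ME proper0.
by rewrite L0ME setU0; exists q.
Qed.

Lemma plus_child_augmentable :
  yielding F Q' -> K \in F -> augmentable P.
Proof.
move=> yF KF A B AP BP pAB.
have [BE | [LB LBC BE]] := plus_childP BP.
  by move: pAB; rewrite BE properE sub0set andbF.
have [AE | [LA LAC AE]] := plus_childP AP; last first.
  by rewrite AE BE; apply: plus_child_step_nonempty => //; rewrite -AE -BE.
have [|q qB qP] := plus_child_step_set0 yF KF LBC.
  by rewrite -BE -proper0 -AE.
by exists q; rewrite AE BE inE setU0.
Qed.

Lemma plus_child_L2 : axiom_L2 P.
Proof.
move=> A B q AP BP sAB _ qAP.
have [BE | [LB LBC BE]] := plus_childP BP.
  have AE : A = set0 by apply/eqP; rewrite -subset0 -BE.
  by rewrite BE -AE.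
have [qAE | [L1 L1C qAE]] := plus_childP qAP.
  by move: (setU11 q A); rewrite qAE inE.
have -> : q |: B = (LB :|: L1) :\: M.
  by rewrite setDUl -BE -qAE setUCA (setUidPl sAB).
by rewrite mem_plus_child // eq_classU.
Qed.

End PlusChild.

Theorem mainTheorem6 (T : finType) (F : {set {set T}}) (Q' : {set T}) :
  learning_space F ->
  2 <= #|domain F| ->
  Q' \proper domain F ->
  Q' != set0 ->
  (yielding F Q' <->
   (forall K, K \in F -> ~ trivial_child F Q' K ->
      learning_space (plus_child F Q' K))).
Proof.
move=> lsF _ _ _; split=> [yF K KF nt | plusLS K L KF Lmin].
  split; first exact: plus_child_knowledge_structure.
    by apply: augmentable_L1; apply: plus_child_augmentable.
  exact: plus_child_L2.
have [LM0 | LM0] := eqVneq (L :\: class_meet F Q' K) set0.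
  by rewrite LM0 cards0.
have [_ l1P _] := plusLS K KF (nontrivial_child (proj1 Lmin) LM0).
exact: minimal_class_card.
Qed.
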